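(* For every level $t \in \mathcal{L}$ there exist finitely many levels $u_1, \ldots, u_n$, each generated by the grammar $u ::= x \mid 0 \mid s(u) \mid \operatorname{imax}(u, u)$ (with $x \in \mathcal{X}$, i.e. containing no $\max$), such that $t =_{\mathcal{L}} \max(u_1, \ldots, u_n)$.
   Context: $\operatorname{imax}\colon \mathbb{N}\times\mathbb{N}\to\mathbb{N}$ is defined by $\operatorname{imax}(i,0)=0$ and $\operatorname{imax}(i,j+1)=\max(i,j+1)$. Levels are the terms of the grammar $t ::= x \mid 0 \mid s(t) \mid \max(t,t) \mid \operatorname{imax}(t,t)$, where $x$ ranges over a countable set of variables $\mathcal{X}$; $\mathcal{L}$ denotes the set of levels. A valuation is a function $\sigma\colon\mathcal{X}\to\mathbb{N}$; the value $[t]_\sigma$ is defined by $[0]_\sigma=0$, $[x]_\sigma=\sigma(x)$, $[s(t)]_\sigma=[t]_\sigma+1$, $[\max(t_1,t_2)]_\sigma=\max([t_1]_\sigma,[t_2]_\sigma)$, $[\operatorname{imax}(t_1,t_2)]_\sigma=\operatorname{imax}([t_1]_\sigma,[t_2]_\sigma)$. $t_1 =_{\mathcal{L}} t_2$ means $[t_1]_\sigma=[t_2]_\sigma$ for every valuation $\sigma$. $\max(u_1,\ldots,u_n)$ denotes the $n$-ary maximum (its value is the maximum of the values). *)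

From Stdlib Require Import Arith List.
Import ListNotations.

Definition imax (i j : nat) : nat :=
  match j with 0 => 0 | S _ => Nat.max i j end.

Inductive level : Type :=
| LVar  : nat -> level
| LZero : level
| LSucc : level -> level
| LMax  : level -> level -> level
| LIMax : level -> level -> level.

Fixpoint eval (sigma : nat -> nat) (t : level) : nat :=
  match t with
  | LVar x => sigma x
  | LZero => 0
  | LSucc t => S (eval sigma t)
  | LMax a b => Nat.max (eval sigma a) (eval sigma b)
  | LIMax a b => imax (eval sigma a) (eval sigma b)
  end.

Definition level_eq (t1 t2 : level) : Prop :=
  forall sigma : nat -> nat, eval sigma t1 = eval sigma t2.

Fixpoint max_free (u : level) : Prop :=
  match u with
  | LVar _ | LZero => True
  | LSucc u => max_free u
  | LMax _ _ => False
  | LIMax a b => max_free a /\ max_free b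
  end.

Definition eval_nmax (sigma : nat -> nat) (us : list level) : nat :=
  fold_right (fun u m => Nat.max (eval sigma u) m) 0 us.

(* The successor and imax, in either argument, distribute over max, and so do
   they over n-ary maxima of nonempty lists (the empty maximum is 0, and
   s(0) <> 0).  Pushing s and imax below every max therefore turns a level
   into the maximum of a nonempty list of max-free levels: s(max us) is
   max (map s us), and imax(max us, max vs) is the maximum of imax(u, v) over
   all pairs (u, v). *)

From Stdlib Require Import Arith List Lia.
Import ListNotations.

Lemma imax_maxl a b c : imax (Nat.max a b) c = Nat.max (imax a c) (imax b c).
Proof. destruct c; simpl; lia. Qed.

Lemma imax_maxr a b c : imax a (Nat.max b c) = Nat.max (imax a b) (imax a c).
Proof. destruct b, c; simpl; lia. Qed.

Lemma list_max_map_distr (f : nat -> nat) (l : list nat) :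
  (forall a b, f (Nat.max a b) = Nat.max (f a) (f b)) ->
  l <> [] -> list_max (map f l) = f (list_max l).
Proof.
  intros f_max; induction l as [|a [|b l] IH]; intros l_ne; [easy| |].
  - simpl; rewrite !Nat.max_0_r; reflexivity.
  - change (Nat.max (f a) (list_max (map f (b :: l))) = f (Nat.max a (list_max (b :: l)))).
    rewrite IH by discriminate; symmetry; apply f_max.
Qed.

Lemma list_max_map_flat_map {A B : Type} (f : B -> nat) (g : A -> list B) (l : list A) :
  list_max (map f (flat_map g l)) = list_max (map (fun x => list_max (map f (g x))) l).
Proof.
  induction l as [|a l IH]; [reflexivity|].
  simpl; rewrite map_app, list_max_app, IH; reflexivity.
Qed.

Lemma eval_nmaxE sigma us : eval_nmax sigma us = list_max (map (eval sigma) us).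
Proof. induction us as [|u us IH]; simpl; [reflexivity|]; rewrite IH; reflexivity. Qed.

Definition imax_pairs (us vs : list level) : list level :=
  flat_map (fun u => map (LIMax u) vs) us.

Fixpoint normalize (t : level) : list level :=
  match t with
  | LVar x => [LVar x]
  | LZero => [LZero]
  | LSucc t => map LSucc (normalize t)
  | LMax a b => normalize a ++ normalize b
  | LIMax a b => imax_pairs (normalize a) (normalize b)
  end.

Lemma map_ne {A B : Type} (f : A -> B) (l : list A) : l <> [] -> map f l <> [].
Proof. destruct l; easy. Qed.

Lemma imax_pairs_ne us vs : us <> [] -> vs <> [] -> imax_pairs us vs <> [].
Proof. destruct us, vs; easy. Qed.

Lemma normalize_ne t : normalize t <> [].
Proof.
  induction t as [| | t IH | a IHa b IHb | a IHa b IHb]; simpl; try discriminate.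
  - exact (map_ne _ _ IH).
  - destruct (normalize a); easy.
  - exact (imax_pairs_ne _ _ IHa IHb).
Qed.

Lemma normalize_max_free t : Forall max_free (normalize t).
Proof.
  induction t as [| | t IH | a IHa b IHb | a IHa b IHb]; simpl.
  - repeat constructor.
  - repeat constructor.
  - apply Forall_map; exact IH.
  - apply Forall_app; auto.
  - apply Forall_flat_map; apply (Forall_impl _ (P := max_free)); [|exact IHa].
    intros u u_free; apply Forall_map.
    apply (Forall_impl _ (P := max_free)); [|exact IHb].
    intros v v_free; exact (conj u_free v_free).
Qed.

Lemma eval_nmax_succ sigma us :
  us <> [] -> eval_nmax sigma (map LSucc us) = S (eval_nmax sigma us).
Proof.
  intros us_ne; rewrite !eval_nmaxE.
  replace (map (eval sigma) (map LSucc us))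
    with (map S (map (eval sigma) us)) by (rewrite !map_map; reflexivity).
  apply (list_max_map_distr S (map (eval sigma) us)); [lia | exact (map_ne _ _ us_ne)].
Qed.

Lemma eval_nmax_imax_pairs sigma us vs : us <> [] -> vs <> [] ->
  eval_nmax sigma (imax_pairs us vs) = imax (eval_nmax sigma us) (eval_nmax sigma vs).
Proof.
  intros us_ne vs_ne; rewrite !eval_nmaxE.
  unfold imax_pairs; rewrite list_max_map_flat_map.
  set (M := list_max (map (eval sigma) vs)).
  assert (inner : forall u, list_max (map (eval sigma) (map (LIMax u) vs))
                            = imax (eval sigma u) M).
  { intros u.
    replace (map (eval sigma) (map (LIMax u) vs))
      with (map (imax (eval sigma u)) (map (eval sigma) vs)) by (rewrite !map_map; reflexivity).
    apply (list_max_map_distr (imax (eval sigma u))); [apply imax_maxr | exact (map_ne _ _ vs_ne)]. }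
  rewrite (map_ext _ _ inner), <- (map_map (eval sigma) (fun a => imax a M)).
  apply list_max_map_distr; [intros; apply imax_maxl | exact (map_ne _ _ us_ne)].
Qed.

Lemma eval_normalize sigma t : eval sigma t = eval_nmax sigma (normalize t).
Proof.
  induction t as [| | t IH | a IHa b IHb | a IHa b IHb]; simpl.
  - lia.
  - reflexivity.
  - rewrite eval_nmax_succ by apply normalize_ne; congruence.
  - rewrite !eval_nmaxE, map_app, list_max_app, <- !eval_nmaxE; congruence.
  - rewrite eval_nmax_imax_pairs by apply normalize_ne; congruence.
Qed.

Theorem theorem13 : forall t : level,
  exists us : list level,
    us <> nil /\
    Forall max_free us /\
    forall sigma : nat -> nat, eval sigma t = eval_nmax sigma us.
Proof.
  intros t; exists (normalize t).
  split; [apply normalize_ne |].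
  split; [apply normalize_max_free |].
  intros sigma; apply eval_normalize.
Qed.
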